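(* Fix a wavelength $\lambda>0$, a numerical aperture $NA>0$ and a constant $A>0$. Let $P(\mathbf f)=1$ if $|\mathbf f|<NA/\lambda$ and $P(\mathbf f)=0$ otherwise ($\mathbf f=(f_x,f_y)\in\mathbb R^2$). Let $q_n\ge 0$ be an illumination intensity supported in the half-disk $\{\boldsymbol\rho=(\rho\cos\theta,\rho\sin\theta): 0\le\rho<NA/\lambda,\ \theta\in[\theta_0-\pi/2,\theta_0+\pi/2]\}$ with $\theta_0=0$. Define the phase transfer function $$\widetilde H_n(\mathbf f)=iA\iint q_n(\boldsymbol\rho)P^*(\boldsymbol\rho)\big[P(\boldsymbol\rho+\mathbf f)-P(\boldsymbol\rho-\mathbf f)\big]\,d^2\boldsymbol\rho ,$$ and the point spread function $H_n=\mathcal F^{-1}\widetilde H_n$. Let $u(x,y)=\operatorname{sign}(x)$ and let $g=H_n\otimes u$ be the filter response (2D convolution). Then the response magnitude is maximal along the $y$-axis: $|g(x,y)|\le |g(0,y)|$ for all $(x,y)\in\mathbb R^2$. In this sense $H_n$ is an edge detection filter for edges drawn along the $y$-axis.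
   Context: $\mathcal F^{-1}$ denotes the inverse 2D Fourier transform and $\otimes$ 2D convolution. The Fourier transform of $u$ is $\widetilde u(f_x,f_y)=\frac{1}{i f_x}$ concentrated on the line $f_y=0$ (i.e. $\frac{1}{if_x}\delta(f_y)$). $P$ is the aberration-free pupil of the objective lens; $q_n$ is the intensity of the incident oblique plane-wave illumination, and $\theta_0$ is the central illumination direction. *)

(* Complex numbers are represented explicitly as
   pairs (real part, imaginary part) in R * R, since the Lebesgue integral of
   MathComp-Analysis is real-valued; complex integrals are taken componentwise. *)
From mathcomp Require Import all_boot all_algebra.
From mathcomp Require Import all_classical all_reals all_analysis.
Import GRing.Theory Num.Theory.
Local Open Scope ring_scope.

Set Implicit Arguments.
Unset Strict Implicit.
Unset Printing Implicit Defensive.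

Section Defs.
Variable R : realType.

Definition cplx := (R * R)%type.
Definition cI : cplx := (0, 1).
Definition cmul (z w : cplx) : cplx :=
  (z.1 * w.1 - z.2 * w.2, z.1 * w.2 + z.2 * w.1).
Definition cinv (z : cplx) : cplx :=
  (z.1 / (z.1 ^+ 2 + z.2 ^+ 2), - z.2 / (z.1 ^+ 2 + z.2 ^+ 2)).
Definition cmod (z : cplx) : R := Num.sqrt (z.1 ^+ 2 + z.2 ^+ 2).
Definition cexp2pi (t : R) : cplx := (cos (2 * pi * t), sin (2 * pi * t)).

Definition vnorm (f : R * R) : R := Num.sqrt (f.1 ^+ 2 + f.2 ^+ 2).
Definition vadd (u v : R * R) : R * R := (u.1 + v.1, u.2 + v.2).
Definition vsub (u v : R * R) : R * R := (u.1 - v.1, u.2 - v.2).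

Definition leb2 := ((@lebesgue_measure R) \x (@lebesgue_measure R))%E.

(* aberration-free pupil: P(f) = 1 if |f| < NA/lambda, 0 otherwise.
   It is real-valued, so P^* = P. *)
Definition pupil (lam NA : R) (f : R * R) : R :=
  if vnorm f < NA / lam then 1 else 0.

Definition Htilde (lam NA A : R) (q : R * R -> R) (f : R * R) : cplx :=
  cmul cI (A * Rintegral leb2 setT
     (fun rho => q rho * pupil lam NA rho *
        (pupil lam NA (vadd rho f) - pupil lam NA (vsub rho f))), 0).

(* Fourier transform of u(x,y) = sign(x): (1/(i f_x)) delta(f_y); this is the
   coefficient 1/(i f_x) of delta(f_y). *)
Definition utilde_coef (fx : R) : cplx := cinv (cmul cI (fx, 0)).

(* Integrand (in f_x) of F^{-1}[Ht_n * u~] after integrating out delta(f_y),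
   i.e. f_y = 0:  Ht_n(f_x,0) (1/(i f_x)) e^{2 pi i (f_x x + 0 y)}. *)
Definition g_integrand (lam NA A : R) (q : R * R -> R) (x y fx : R) : cplx :=
  cmul (cmul (Htilde lam NA A q (fx, 0)) (utilde_coef fx))
       (cexp2pi (fx * x + 0 * y)).

(* filter response g = H_n (x) u = F^{-1}[ Ht_n * u~ ] (convolution theorem),
   with H_n = F^{-1} Ht_n; complex integral taken componentwise. *)
Definition response (lam NA A : R) (q : R * R -> R) (x y : R) : cplx :=
  (Rintegral (@lebesgue_measure R) setT (fun fx => (g_integrand lam NA A q x y fx).1),
   Rintegral (@lebesgue_measure R) setT (fun fx => (g_integrand lam NA A q x y fx).2)).

Definition in_half_disk (lam NA theta0 : R) (rho : R * R) : Prop :=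
  exists r theta : R,
    0 <= r /\ r < NA / lam /\
    theta0 - pi / 2 <= theta /\ theta <= theta0 + pi / 2 /\
    rho = (r * cos theta, r * sin theta).

End Defs.

(* On the line f_y = 0 the product Ht_n(f_x, 0) * 1/(i f_x) is a real kernel
   k(f_x) = A h(f_x) / f_x, and k <= 0 everywhere: the illumination lives in
   the half plane rho_x >= 0, where |rho - f| <= |rho + f| for f_x >= 0, so
   P(rho + f) <= P(rho - f) there, and the inequality reverses for f_x <= 0.
   Hence g(x, y) = \int k(f_x) e^{2 pi i f_x x} df_x, and the triangle
   inequality for this complex integral gives
   |g(x, y)| <= \int |k| = |\int k| = |g(0, y)|. *)
From mathcomp Require Import all_boot all_algebra.
From mathcomp Require Import all_classical all_reals all_analysis.
From mathcomp Require Import ring lra.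
Import GRing.Theory Num.Theory.
Import order.Order.TTheory.
Local Open Scope ring_scope.

Set Implicit Arguments.
Unset Strict Implicit.
Unset Printing Implicit Defensive.

Lemma normr_le_sqr (R : realDomainType) (x y : R) :
  0 <= y -> x ^+ 2 <= y ^+ 2 -> `|x| <= y.
Proof. by move=> y_ge0 xy; rewrite ler_norml; apply/andP; split; nra. Qed.

Section RintegralFacts.
Context d {T : measurableType d} {R : realType}.
Variable mu : {measure set T -> \bar R}.

Lemma Rintegral_le0 (D : set T) (f : T -> R) :
  (forall x, D x -> f x <= 0) -> \int[mu]_(x in D) f x <= 0.
Proof.
move=> f_le0; rewrite /Rintegral; apply: fine_le0.
have -> : (\int[mu]_(x in D) (f x)%:E = \int[mu]_(x in D) - (- f x)%:E)%E.
  by apply: eq_integral => x _; rewrite EFinN oppeK.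
have Nf_ge0 x : D x -> (0 <= (- f x)%:E)%E.
  by move=> Dx; rewrite lee_fin oppr_ge0 f_le0.
by rewrite integral_ge0N // oppe_le0; apply: integral_ge0.
Qed.

Lemma integrable_mulr_bounded (k g : T -> R) {M : R} :
  mu.-integrable setT (EFin \o k) -> measurable_fun setT g ->
  (forall t, `|g t| <= M) -> mu.-integrable setT (EFin \o (k \* g)).
Proof.
move=> k_int g_meas g_le.
have g_bounded : [bounded g t | t in setT].
  exists M; split; first exact: num_real.
  by move=> N /ltW M_le_N t _; apply: le_trans (g_le t) M_le_N.
have -> : EFin \o (k \* g) = ((EFin \o k) \* (EFin \o g))%E by apply/funext => t.
exact: integrableMl.
Qed.

Lemma Rintegral_cplx_norm_le (k c s : T -> R) :
  mu.-integrable setT (EFin \o k) ->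
  measurable_fun setT c -> measurable_fun setT s ->
  (forall t, c t ^+ 2 + s t ^+ 2 <= 1) ->
  Num.sqrt ((\int[mu]_t (k t * c t)) ^+ 2 + (\int[mu]_t (k t * s t)) ^+ 2)
    <= \int[mu]_t `|k t|.
Proof.
move=> k_int c_meas s_meas cs_le1.
set a := \int[mu]_t (k t * c t); set b := \int[mu]_t (k t * s t).
set r := Num.sqrt (a ^+ 2 + b ^+ 2).
have r_ge0 : 0 <= r := sqrtr_ge0 _.
have r2 : r ^+ 2 = a ^+ 2 + b ^+ 2 by rewrite sqr_sqrtr // addr_ge0 // sqr_ge0.
have bound_c t : `|c t| <= 1.
  by apply: normr_le_sqr; have := sqr_ge0 (s t); have := cs_le1 t; lra.
have bound_s t : `|s t| <= 1.
  by apply: normr_le_sqr; have := sqr_ge0 (c t); have := cs_le1 t; lra.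
have ac_meas : measurable_fun setT (fun t => a * c t) by apply: measurableT_comp.
have bs_meas : measurable_fun setT (fun t => b * s t) by apply: measurableT_comp.
have bound_ac t : `|a * c t| <= `|a| by rewrite normrM ler_piMr.
have bound_bs t : `|b * s t| <= `|b| by rewrite normrM ler_piMr.
have bound_acbs t : `|a * c t + b * s t| <= `|a| + `|b|.
  exact: le_trans (ler_normD _ _) (lerD (bound_ac t) (bound_bs t)).
(* Pairing with the direction [(a, b)]: [a^2 + b^2 = \int k (a c + b s)], and
   [|a c + b s| <= r] by Cauchy-Schwarz, so [r^2 <= r \int |k|]. *)
have ab_int : a ^+ 2 + b ^+ 2 = \int[mu]_t (k t * (a * c t + b * s t)).
  under eq_Rintegral do rewrite mulrDr.
  rewrite RintegralD //; last 2 first.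
  - exact: integrable_mulr_bounded k_int ac_meas bound_ac.
  - exact: integrable_mulr_bounded k_int bs_meas bound_bs.
  under eq_Rintegral do rewrite mulrCA.
  under [X in _ = _ + X]eq_Rintegral do rewrite mulrCA.
  rewrite !RintegralZl //; last 2 first.
  - exact: integrable_mulr_bounded k_int s_meas bound_s.
  - exact: integrable_mulr_bounded k_int c_meas bound_c.
have ab_le : a ^+ 2 + b ^+ 2 <= \int[mu]_t `|k t| * r.
  rewrite -RintegralZr //; last exact: integrable_norm.
  rewrite ab_int; apply: le_Rintegral => //.
  - apply: integrable_mulr_bounded k_int _ bound_acbs.
    exact: measurable_realfun.measurable_funD.
  - have bound_r (t : T) : `|r| <= r by rewrite ger0_norm.
    exact: integrable_mulr_bounded (integrable_norm k_int) (measurable_cst r) bound_r.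
  - move=> t _; apply: le_trans (ler_norm _) _.
    rewrite normrM ler_wpM2l // normr_le_sqr // r2.
    have := sqr_ge0 (a * s t - b * c t); have := cs_le1 t; nra.
have I_ge0 : 0 <= \int[mu]_t `|k t| by apply: Rintegral_ge0.
nra.
Qed.

Lemma Rintegral_normr_le0 (k : T -> R) :
  mu.-integrable setT (EFin \o k) -> (forall t, k t <= 0) ->
  \int[mu]_t `|k t| = `|\int[mu]_t k t|.
Proof.
move=> k_int k_le0; rewrite ler0_norm; last exact: Rintegral_le0.
under eq_Rintegral do rewrite ler0_norm // -mulN1r.
by rewrite RintegralZl // mulN1r.
Qed.

End RintegralFacts.

Lemma cmod_real (R : realType) (z : R) : cmod (z, 0) = `|z|.
Proof. by rewrite /cmod /= expr0n addr0 sqrtr_sqr. Qed.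

Lemma measurable_phase (R : realType) (trig : R -> R) (x : R) :
  measurable_fun setT trig ->
  measurable_fun setT (fun fx : R => trig (2 * pi * (fx * x))).
Proof.
move=> trig_meas; apply: measurableT_comp => //.
by apply: measurableT_comp => //; exact: measurable_realfun.mulrr_measurable.
Qed.

Section EdgeKernel.
Variables (R : realType) (lam NA A : R) (q : R * R -> R).

Lemma pupil_ge0 (f : R * R) : 0 <= pupil lam NA f.
Proof. by rewrite /pupil; case: ifP. Qed.

Lemma pupil_le (u v : R * R) :
  vnorm u <= vnorm v -> pupil lam NA v <= pupil lam NA u.
Proof.
move=> uv; rewrite /pupil; case: ifP => [v_in|_]; last by case: ifP.
by rewrite (le_lt_trans uv v_in).
Qed.

Lemma half_disk0_ge0 (rho : R * R) : in_half_disk lam NA 0 rho -> 0 <= rho.1.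
Proof.
move=> [r [th [r_ge0 [_ [th_ge [th_le ->]]]]]] /=.
by apply: mulr_ge0 => //; apply: cos_ge0_pihalf; apply/andP; split; lra.
Qed.

Lemma vnorm_sub_le_add (rho : R * R) (fx : R) :
  0 <= rho.1 * fx -> vnorm (vsub rho (fx, 0)) <= vnorm (vadd rho (fx, 0)).
Proof.
move=> h; rewrite /vnorm /= ler_sqrt; last by rewrite addr_ge0 // sqr_ge0.
by rewrite subr0 addr0 lerD2r; nra.
Qed.

Lemma vnorm_add_le_sub (rho : R * R) (fx : R) :
  rho.1 * fx <= 0 -> vnorm (vadd rho (fx, 0)) <= vnorm (vsub rho (fx, 0)).
Proof.
move=> h; rewrite /vnorm /= ler_sqrt; last by rewrite addr_ge0 // sqr_ge0.
by rewrite subr0 addr0 lerD2r; nra.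
Qed.

Lemma pupil_shift_sign (rho : R * R) (fx : R) : 0 <= rho.1 ->
  fx * (pupil lam NA (vadd rho (fx, 0)) - pupil lam NA (vsub rho (fx, 0))) <= 0.
Proof.
move=> rho_ge0; have [fx_ge0|fx_lt0] := leP 0 fx.
- apply: mulr_ge0_le0 => //; rewrite subr_le0; apply: pupil_le.
  exact/vnorm_sub_le_add/mulr_ge0.
- apply: mulr_le0_ge0; first exact: ltW.
  rewrite subr_ge0; apply: pupil_le.
  exact/vnorm_add_le_sub/mulr_ge0_le0/ltW.
Qed.

Hypothesis A_gt0 : 0 < A.
Hypothesis q_ge0 : forall rho, 0 <= q rho.
Hypothesis q_supp : forall rho, ~ in_half_disk lam NA 0 rho -> q rho = 0.

Definition ptf_axis (fx : R) : R :=
  \int[@leb2 R]_rho (q rho * pupil lam NA rho *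
     (pupil lam NA (vadd rho (fx, 0)) - pupil lam NA (vsub rho (fx, 0)))).

(* At [fx = 0] the division yields [0], matching [utilde_coef 0 = (0, 0)]. *)
Definition edge_kernel (fx : R) : R := A * ptf_axis fx / fx.

Lemma Htilde_utilde_axis (fx : R) :
  cmul (Htilde lam NA A q (fx, 0)) (utilde_coef fx) = (edge_kernel fx, 0).
Proof.
rewrite /Htilde /utilde_coef /cmul /cinv /cI /edge_kernel -/(ptf_axis fx) /=.
rewrite !(mul0r, mulr0, mul1r, subr0, add0r, addr0, oppr0, expr0n).
have [->|fx_neq0] := eqVneq fx 0.
  by rewrite !(mul0r, mulr0, expr0n, invr0, oppr0, addr0).
by congr (_, _); field; rewrite ?sqrf_eq0.
Qed.

Lemma response_axis (x y : R) : response lam NA A q x y =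
  (\int[lebesgue_measure]_fx (edge_kernel fx * cos (2 * pi * (fx * x))),
   \int[lebesgue_measure]_fx (edge_kernel fx * sin (2 * pi * (fx * x)))).
Proof.
rewrite /response /g_integrand; congr (_, _); apply: eq_Rintegral => fx _;
  by rewrite Htilde_utilde_axis /cmul /cexp2pi /= !(mul0r, addr0, subr0).
Qed.

Lemma response_origin (y : R) :
  response lam NA A q 0 y = (\int[lebesgue_measure]_fx edge_kernel fx, 0).
Proof.
rewrite response_axis; congr (_, _).
  by apply: eq_Rintegral => fx _; rewrite !mulr0 cos0 mulr1.
under eq_Rintegral do rewrite !mulr0 sin0 mulr0.
by rewrite Rintegral_cst // mul0r.
Qed.

Lemma ptf_integrand_sign (fx : R) (rho : R * R) :
  fx * (q rho * pupil lam NA rho *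
     (pupil lam NA (vadd rho (fx, 0)) - pupil lam NA (vsub rho (fx, 0)))) <= 0.
Proof.
have [q0|q_neq0] := eqVneq (q rho) 0; first by rewrite q0 !mul0r mulr0.
have rho_in : in_half_disk lam NA 0 rho.
  by have [//|/q_supp q0] := pselect (in_half_disk lam NA 0 rho);
     rewrite q0 eqxx in q_neq0.
rewrite mulrCA; apply: mulr_ge0_le0; first by rewrite mulr_ge0 ?pupil_ge0.
exact/pupil_shift_sign/half_disk0_ge0.
Qed.

Lemma ptf_axis_sign (fx : R) : fx * ptf_axis fx <= 0.
Proof.
have [fx_lt0|fx_gt0|->] := ltgtP fx 0; last by rewrite mul0r.
- rewrite nmulr_rle0 //; apply: Rintegral_ge0 => rho _.
  by rewrite -(nmulr_rle0 _ fx_lt0) ptf_integrand_sign.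
- rewrite pmulr_rle0 //; apply: Rintegral_le0 => rho _.
  by rewrite -(pmulr_rle0 _ fx_gt0) ptf_integrand_sign.
Qed.

Lemma edge_kernel_le0 (fx : R) : edge_kernel fx <= 0.
Proof.
have [->|fx_neq0] := eqVneq fx 0; first by rewrite /edge_kernel invr0 mulr0.
have -> : edge_kernel fx = A * (fx * ptf_axis fx) / fx ^+ 2.
  by rewrite /edge_kernel; field.
rewrite -mulrA; apply: mulr_ge0_le0; first exact: ltW.
by apply: mulr_le0_ge0; rewrite ?ptf_axis_sign ?invr_ge0 ?sqr_ge0.
Qed.

Lemma edge_kernel_integrable :
  lebesgue_measure.-integrable setT
    (fun fx => (cmod (cmul (Htilde lam NA A q (fx, 0)) (utilde_coef fx)))%:E) ->
  lebesgue_measure.-integrable setT (EFin \o edge_kernel).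
Proof.
move=> H_int.
have -> : EFin \o edge_kernel = (-%E \o fun fx => `|edge_kernel fx|%:E).
  by apply/funext => fx /=; rewrite ler0_norm ?edge_kernel_le0 // opprK.
apply: integrableN; apply: eq_integrable H_int => // fx _.
by rewrite Htilde_utilde_axis cmod_real.
Qed.

End EdgeKernel.

Theorem lemma1 (R : realType) (lam NA A : R) (q : R * R -> R) :
  0 < lam -> 0 < NA -> 0 < A ->
  (* q_n : nonnegative, measurable, integrable intensity *)
  measurable_fun setT q ->
  (forall rho, 0 <= q rho) ->
  (@leb2 R).-integrable setT (fun rho => (q rho)%:E) ->
  (* supported in the half-disk with theta0 = 0 *)
  (forall rho, ~ in_half_disk lam NA 0 rho -> q rho = 0) ->
  (* well-definedness of g = F^{-1}[Ht_n u~] as a Lebesgue integral *)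
  (@lebesgue_measure R).-integrable setT
     (fun fx => (cmod (cmul (Htilde lam NA A q (fx, 0)) (utilde_coef fx)))%:E) ->
  forall x y : R,
    cmod (response lam NA A q x y) <= cmod (response lam NA A q 0 y).
Proof.
move=> _ _ A_gt0 _ q_ge0 _ q_supp H_int x y.
have k_le0 fx : edge_kernel lam NA A q fx <= 0 by exact: edge_kernel_le0.
have k_int := edge_kernel_integrable A_gt0 q_ge0 q_supp H_int.
rewrite response_origin cmod_real -Rintegral_normr_le0 // response_axis.
have cos_meas : measurable_fun setT (fun fx : R => cos (2 * pi * (fx * x))).
  apply: measurable_phase.
  exact: measurable_realfun.continuous_measurable_fun (@continuous_cos R).
have sin_meas : measurable_fun setT (fun fx : R => sin (2 * pi * (fx * x))).
  apply: measurable_phase.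
  exact: measurable_realfun.continuous_measurable_fun (@continuous_sin R).
apply: (Rintegral_cplx_norm_le k_int cos_meas sin_meas) => t.
by rewrite cos2Dsin2.
Qed.
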